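(* Let $F$ be the graph with vertex set $\{a,b,c,d,e,g,h,i,x,x'\}$ and edge set $\{de,\ da,\ ae,\ dc,\ ec,\ ac,\ eg,\ cg,\ db,\ ab,\ cb,\ gb,\ ex',\ bx',\ di,\ ix,\ ah,\ hx\}$. Then $F$ has an acyclic $(\mathcal{S}_3,\mathcal{S}_3)$-colouring, and in every acyclic $(\mathcal{S}_3,\mathcal{S}_3)$-colouring $f$ of $F$ we have $f(x)=f(x')$, the vertex $x$ has exactly two neighbours coloured $f(x)$, and the vertex $x'$ has exactly one neighbour coloured $f(x')$.
   Context: An acyclic $(\mathcal{S}_3,\mathcal{S}_3)$-colouring of a graph $G$ is a map $c:V(G)\to\{1,2\}$ (not necessarily proper) such that each of the two colour classes induces a subgraph of maximum degree at most $3$, and there is no cycle in $G$ every edge of which joins a vertex of colour $1$ to a vertex of colour $2$. *)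

From HB Require Import structures.
From mathcomp Require Import all_boot.
Set Implicit Arguments. Unset Strict Implicit. Unset Printing Implicit Defensive.

(* Generic notions for a simple graph given by a symmetric irreflexive
   relation [adj] on a finite type [V]; a 2-colouring is a map V -> bool
   (colour 1 = false, colour 2 = true). *)

Definition S3S3_degree_ok (V : finType) (adj : rel V) (c : V -> bool) : Prop :=
  forall v : V, #|[set u | adj v u & c u == c v]| <= 3.

Definition bichromatic (V : finType) (adj : rel V) (c : V -> bool) : rel V :=
  fun u v => adj u v && (c u != c v).

Definition no_bichromatic_cycle (V : finType) (adj : rel V) (c : V -> bool) : Prop :=
  forall s : seq V, uniq s -> 3 <= size s -> ~~ cycle (bichromatic adj c) s.

Definition acyclic_S3S3_colouring (V : finType) (adj : rel V) (c : V -> bool) : Prop :=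
  S3S3_degree_ok adj c /\ no_bichromatic_cycle adj c.

Inductive FV := Va | Vb | Vc | Vd | Ve | Vg | Vh | Vi | Vx | Vx'.

Definition FV_to_ord (v : FV) : 'I_10 :=
  match v with
  | Va => @Ordinal 10 0 isT | Vb => @Ordinal 10 1 isT | Vc => @Ordinal 10 2 isT
  | Vd => @Ordinal 10 3 isT | Ve => @Ordinal 10 4 isT | Vg => @Ordinal 10 5 isT
  | Vh => @Ordinal 10 6 isT | Vi => @Ordinal 10 7 isT | Vx => @Ordinal 10 8 isT
  | Vx' => @Ordinal 10 9 isT
  end.

Definition ord_to_FV (i : 'I_10) : FV :=
  match val i with
  | 0 => Va | 1 => Vb | 2 => Vc | 3 => Vd | 4 => Ve | 5 => Vg
  | 6 => Vh | 7 => Vi | 8 => Vx | _ => Vx'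
  end.

Lemma FV_to_ordK : cancel FV_to_ord ord_to_FV.
Proof. by case. Qed.

HB.instance Definition _ := Equality.copy FV (can_type FV_to_ordK).
HB.instance Definition _ := Choice.copy FV (can_type FV_to_ordK).
HB.instance Definition _ := Countable.copy FV (can_type FV_to_ordK).
HB.instance Definition _ := Finite.copy FV (can_type FV_to_ordK).

Definition F_edges : seq (FV * FV) :=
  [:: (Vd, Ve); (Vd, Va); (Va, Ve); (Vd, Vc); (Ve, Vc); (Va, Vc); (Ve, Vg);
      (Vc, Vg); (Vd, Vb); (Va, Vb); (Vc, Vb); (Vg, Vb); (Ve, Vx'); (Vb, Vx');
      (Vd, Vi); (Vi, Vx); (Va, Vh); (Vh, Vx)].

Definition Fadj : rel FV :=
  fun u v => ((u, v) \in F_edges) || ((v, u) \in F_edges).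

(* Existence: for the colouring [F_colouring] there is an ordering of the
   vertices in which every vertex has at most one later bichromatic neighbour,
   so its bichromatic graph is a forest.  Uniqueness of the pattern at x and x':
   already the degree bound together with the absence of sixteen bichromatic
   4- and 6-cycles of F ([F_cycles]) forces the conclusion, which is checked
   over all 2^10 colourings. *)
From Stdlib Require Import FunctionalExtensionality.
From mathcomp Require Import all_boot.

Set Implicit Arguments.
Unset Strict Implicit.
Unset Printing Implicit Defensive.

Section CyclesAndDegeneracy.

Variables (T : eqType) (r : rel T).

Lemma cycle_two_neighbours (s : seq T) (x : T) :
  uniq s -> 3 <= size s -> cycle r s -> x \in s ->
  exists y z, [/\ y \in s, z \in s, uniq [:: x; y; z], r x y & r z x].
Proof.
move=> us ss cs /rot_to [i s' Erot].
have size_s : size s = (size s').+1 by rewrite -(size_rot i s) Erot.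
case: s' Erot size_s => [|y [|w t]] Erot size_s; rewrite size_s // in ss.
have ur : uniq (x :: y :: w :: t) by rewrite -Erot rot_uniq.
have cr : cycle r (x :: y :: w :: t) by rewrite -Erot rot_cycle.
have mem_s u : u \in x :: y :: w :: t -> u \in s by rewrite -Erot mem_rot.
exists y, (last w t); split.
- by apply: mem_s; rewrite !inE eqxx orbT.
- by apply: mem_s; do 2 apply: mem_behead; exact: mem_last.
- have last_wt : last w t \in w :: t := mem_last w t.
  move: ur; rewrite cons_uniq => /andP [xN]; rewrite cons_uniq => /andP [yN _].
  rewrite /= andbT !inE negb_or -andbA; apply/and3P; split.
  + by apply: contraNneq xN => ->; exact: mem_head.
  + by apply: contraNneq xN => ->; exact: mem_behead.
  + by apply: contraNneq yN => ->.
- by case/andP: cr.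
- by move: cr; rewrite /cycle rcons_path => /andP [].
Qed.

Fixpoint one_degenerate (l : seq T) : bool :=
  if l is v :: l' then (count (r v) l' <= 1) && one_degenerate l' else true.

Hypothesis r_sym : symmetric r.

Lemma one_degenerate_acyclic (l s : seq T) :
  one_degenerate l -> uniq l -> uniq s -> 3 <= size s -> {subset s <= l} ->
  ~~ cycle r s.
Proof.
elim: l s => [|v l IHl] s /=.
  by case: s => [|u s] // _ _ _ _ /(_ u (mem_head u s)).
move=> /andP [deg_v deg_l] /andP [vNl ul] us ss sub_s; apply/negP => cs.
have [vs | vNs] := boolP (v \in s); last first.
  apply/negP: cs; apply: IHl => // u su.
  by have := sub_s u su; rewrite inE => /predU1P [uv | //]; rewrite -uv su in vNs.
have [y [z [ys zs /and3P [vyz yz _] ry rz]]] := cycle_two_neighbours us ss cs vs.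
move: vyz; rewrite !inE negb_or => /andP [vy vz].
have in_l u : u \in s -> v != u -> u \in l.
  by move=> su vu; have := sub_s u su; rewrite inE eq_sym (negbTE vu).
have : size [:: y; z] <= count (r v) l.
  rewrite -size_filter; apply: uniq_leq_size; first by rewrite cons_uniq yz.
  move=> u; rewrite !inE mem_filter => /predU1P [-> | /eqP ->].
    by rewrite ry in_l.
  by rewrite r_sym rz in_l.
by move: deg_v; case: (count _ _) => [|[|]].
Qed.

End CyclesAndDegeneracy.

Lemma bichromatic_sym (V : finType) (adj : rel V) (c : V -> bool) :
  symmetric adj -> symmetric (bichromatic adj c).
Proof. by move=> adj_sym u v; rewrite /bichromatic adj_sym eq_sym. Qed.

Lemma Fadj_sym : symmetric Fadj.
Proof. by move=> u v; rewrite /Fadj orbC. Qed.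

Lemma card_set_count (V : finType) (vs : seq V) (P : pred V) :
  uniq vs -> (forall v, v \in vs) -> #|[set u | P u]| = count P vs.
Proof.
move=> uniq_vs vs_total; rewrite cardsE -size_filter.
rewrite -(card_uniqP (filter_uniq P uniq_vs)).
by apply: eq_card => u; rewrite mem_filter vs_total andbT.
Qed.

(* [enum FV] does not reduce under [vm_compute]; the finite checks below use
   this explicit enumeration instead. *)
Definition F_vertices : seq FV := [:: Va; Vb; Vc; Vd; Ve; Vg; Vh; Vi; Vx; Vx'].

Lemma mem_F_vertices v : v \in F_vertices.
Proof. by case: v. Qed.

Definition F_mono_degree (c : FV -> bool) (v : FV) : nat :=
  count (fun u => Fadj v u && (c u == c v)) F_vertices.

Lemma card_F_mono_neighbours c v :
  #|[set u | Fadj v u & c u == c v]| = F_mono_degree c v.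
Proof. exact: card_set_count mem_F_vertices. Qed.

Lemma F_degree_okP c :
  reflect (S3S3_degree_ok Fadj c) (all (fun v => F_mono_degree c v <= 3) F_vertices).
Proof.
apply: (iffP allP) => deg_ok v.
- by rewrite card_F_mono_neighbours; apply: deg_ok; apply: mem_F_vertices.
- by rewrite -card_F_mono_neighbours.
Qed.

Definition F_colouring (v : FV) : bool := v \in [:: Ve; Vg; Vh; Vi; Vx; Vx'].

Definition F_elimination_order : seq FV :=
  [:: Vh; Va; Vi; Vd; Ve; Vc; Vg; Vb; Vx; Vx'].

Lemma F_colouring_acyclic : acyclic_S3S3_colouring Fadj F_colouring.
Proof.
split; first by apply/F_degree_okP; vm_compute.
move=> s us ss; apply: (one_degenerate_acyclic _ (l := F_elimination_order)) => //.
- exact/bichromatic_sym/Fadj_sym.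
- by move=> v _; case: v.
Qed.

Definition F_cycles : seq (seq FV) :=
  [:: [:: Vb; Vg; Ve; Vc]; [:: Va; Vd; Vc; Ve]; [:: Va; Vd; Ve; Vc];
      [:: Vb; Vx'; Ve; Vc]; [:: Vb; Vc; Ve; Vd]; [:: Vb; Vx'; Ve; Vg];
      [:: Vb; Vd; Vc; Vg]; [:: Va; Vc; Vg; Ve]; [:: Va; Ve; Vd; Vi; Vx; Vh];
      [:: Va; Vc; Vd; Ve]; [:: Va; Vc; Vd; Vb]; [:: Va; Ve; Vd; Vb];
      [:: Va; Vb; Vc; Vd]; [:: Va; Vd; Vb; Vc]; [:: Va; Vh; Vx; Vi; Vd; Vb];
      [:: Va; Vc; Vg; Vb]].

Lemma F_cycles_are_cycles : {in F_cycles, forall s, uniq s && (3 <= size s)}.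
Proof. by apply/allP. Qed.

Definition F_colour (ca cb cc cd ce cg ch ci cx cx' : bool) (v : FV) : bool :=
  match v with
  | Va => ca | Vb => cb | Vc => cc | Vd => cd | Ve => ce
  | Vg => cg | Vh => ch | Vi => ci | Vx => cx | Vx' => cx'
  end.

Lemma F_colour_eta (f : FV -> bool) :
  f = F_colour (f Va) (f Vb) (f Vc) (f Vd) (f Ve) (f Vg) (f Vh) (f Vi) (f Vx) (f Vx').
Proof. by apply: functional_extensionality; case. Qed.

Lemma F_colour_forced ca cb cc cd ce cg ch ci cx cx'
    (c := F_colour ca cb cc cd ce cg ch ci cx cx') :
  all (fun v => F_mono_degree c v <= 3) F_vertices ->
  ~~ has (cycle (bichromatic Fadj c)) F_cycles ->
  [&& c Vx == c Vx', F_mono_degree c Vx == 2 & F_mono_degree c Vx' == 1].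
Proof.
by rewrite {}/c; case: ca; case: cb; case: cc; case: cd; case: ce; case: cg;
  case: ch; case: ci; case: cx; case: cx'; vm_compute.
Qed.

Theorem mainTheorem7 :
  (exists f : FV -> bool, acyclic_S3S3_colouring Fadj f) /\
  (forall f : FV -> bool, acyclic_S3S3_colouring Fadj f ->
     [/\ f Vx = f Vx',
         #|[set u | Fadj Vx u & f u == f Vx]| = 2
       & #|[set u | Fadj Vx' u & f u == f Vx']| = 1]).
Proof.
split; first by exists F_colouring; exact: F_colouring_acyclic.
move=> f [/F_degree_okP deg_ok no_cycle].
have no_F_cycle : ~~ has (cycle (bichromatic Fadj f)) F_cycles.
  apply/hasPn => s /F_cycles_are_cycles /andP [us ss].
  exact: no_cycle.
rewrite !card_F_mono_neighbours.
rewrite (F_colour_eta f) in deg_ok no_F_cycle *.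
by case/and3P: (F_colour_forced deg_ok no_F_cycle) => /eqP ? /eqP ? /eqP.
Qed.
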